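(* Let $K=\mathbb{Q}(\rho)$ be a simplest cubic field, where $\rho$ is a root of $x^3-ax^2-(a+3)x-1$ with $a\in\mathbb{Z}_{\geq-1}$, and let $\Delta=a^2+3a+9$. Suppose $p^2\mid\Delta$ for a prime $p>3$. Then there are integers $1\leq k,l\leq p-1$ such that $\frac{k+l\rho+\rho^2}{p}\in\mathcal{O}_K$. *)

From mathcomp Require Import all_boot all_order all_algebra all_field.
Set Implicit Arguments. Unset Strict Implicit. Unset Printing Implicit Defensive.
Import Order.TTheory GRing.Theory Num.Theory.
Local Open Scope ring_scope.

Definition simplest_cubic (a : int) : {poly algC} :=
  'X^3 - (a%:~R) *: 'X^2 - ((a + 3)%:~R) *: 'X - 1.

Definition sc_Delta (a : int) : int := a ^+ 2 + 3 * a + 9.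

From mathcomp Require Import all_boot all_order all_algebra all_field.
From mathcomp Require Import ring zify.
Import Order.TTheory GRing.Theory Num.Theory.
Local Open Scope ring_scope.

(* Since 3 is invertible modulo p^2, one can pick c with 3c = a mod p^2.  Then
   p^2 | Delta forces all non-leading coefficients of f(x + c) to be divisible
   by p^2, where f is the simplest cubic, so beta = rho - c satisfies
   beta^3 + p^2 (A beta^2 + B beta + C) = 0.  Squaring away the odd part shows
   that beta^2 / p is an algebraic integer, and beta^2 / p differs from
   (k + l rho + rho^2) / p by an algebraic integer as soon as k = c^2 and
   l = -2c mod p.  These residues are nonzero: p divides f(c) = -1 mod c, so
   p does not divide c. *)

Definition simplest_cubicz (a c : int) : int :=
  c ^+ 3 - a * c ^+ 2 - (a + 3) * c - 1.

Lemma monic_cubic_root_Aint (e2 e1 e0 : int) (x : algC) :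
  x ^+ 3 + e2%:~R * x ^+ 2 + e1%:~R * x + e0%:~R = 0 -> x \in Aint.
Proof.
move=> hx; apply: (@root_monic_Aint (Poly [:: e0%:~R; e1%:~R; e2%:~R; 1])).
- rewrite /root horner_Poly /= mul0r add0r; apply/eqP; rewrite -[RHS]hx; ring.
- by rewrite monicE /lead_coef (@PolyK _ 1) //= oner_neq0.
- apply/polyOverP => i; rewrite coef_Poly.
  by case: i => [|[|[|[|i]]]] /=; rewrite ?nth_nil ?rpred_int ?rpred0 ?rpred1.
Qed.

Lemma Aint_intr_div (q z : int) : (q %| z)%Z -> z%:~R / q%:~R \in (Aint : {pred algC}).
Proof.
case/dvdzP=> e ->; have [->|q0] := eqVneq q 0; first by rewrite mulr0 mul0r rpred0.
by rewrite intrM mulfK ?intr_eq0 // Aint_int.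
Qed.

(* x^2 is a root of (X^3 + v X)^2 - (u X^2 + w)^2, whose coefficients
   2v - u^2, v^2 - 2uw and -w^2 are divisible by q, q^2 and q^3. *)
Lemma monic_cubic_root_sqr_div_Aint {q u v w : int} {x : algC} :
  (q %| u)%Z -> (q %| v)%Z -> (q ^+ 2 %| w)%Z ->
  x ^+ 3 + u%:~R * x ^+ 2 + v%:~R * x + w%:~R = 0 -> x ^+ 2 / q%:~R \in Aint.
Proof.
move=> /dvdzP[u' ->] /dvdzP[v' ->] /dvdzP[w' ->] hx.
have [->|q0] := eqVneq q 0; first by rewrite invr0 mulr0 rpred0.
have q0' : q%:~R != 0 :> algC by rewrite intr_eq0.
apply: (@monic_cubic_root_Aint (2 * v' - q * u' ^+ 2)
  (v' ^+ 2 - 2 * q * u' * w') (- (q * w' ^+ 2))).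
apply: (mulfI (expf_neq0 3 q0')); rewrite mulr0.
have hx' := congr1 (fun y => y * (x ^+ 3 - (u' * q)%:~R * x ^+ 2 + (v' * q)%:~R * x
                                  - (w' * q ^+ 2)%:~R)) hx.
rewrite /= mul0r in hx'; rewrite -hx'; field; exact: q0'.
Qed.

Lemma coprimez_prime_sqr_3 {p : nat} : prime p -> (3 < p)%N -> coprimez (p%:Z ^+ 2) 3.
Proof.
move=> pp p3; rewrite coprimez_sym coprimezXr // coprimezE /= prime_coprime //.
by apply/negP; rewrite dvdn_prime2 // => /eqP p_eq3; rewrite -p_eq3 in p3.
Qed.

Lemma exists_third_modz {m : int} (a : int) : coprimez m 3 -> exists c, (m %| 3 * c - a)%Z.
Proof.
case/coprimezP=> -[u v] /= huv; exists (a * v); apply/dvdzP; exists (- a * u).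
have -> : 3 * (a * v) - a = a * (u * m + v * 3) - a * u * m - a by ring.
by rewrite huv; ring.
Qed.

Lemma coprimez_simplest_cubicz (a c : int) : coprimez c (simplest_cubicz a c).
Proof.
apply/coprimezP; exists (c ^+ 2 - a * c - (a + 3), -1) => /=.
by rewrite /simplest_cubicz; ring.
Qed.

Lemma dvdz_simplest_cubicz_ndvdz {d : int} (a c : int) : `|d|%N != 1%N ->
  (d %| simplest_cubicz a c)%Z -> ~~ (d %| c)%Z.
Proof.
move=> d_neq1 dvd_f; apply: contra d_neq1 => dvd_c.
by rewrite -dvdz1 -[X in (d %| X)%Z](eqP (coprimez_simplest_cubicz a c)) dvdz_gcd dvd_c.
Qed.

(* Use 3 (3c^2 - 2ac - (a+3)) = (3c - a)^2 - Delta
   and 27 f(c) = (3c - a)^3 - 3 (3c - a) Delta - (2a + 3) Delta. *)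
Lemma simplest_cubicz_shift_dvd {m a c : int} :
  coprimez m 3 -> (m %| 3 * c - a)%Z -> (m %| sc_Delta a)%Z ->
  (m %| 3 * c ^+ 2 - 2 * a * c - (a + 3))%Z /\ (m %| simplest_cubicz a c)%Z.
Proof.
move=> m3 hc hD; split.
- rewrite -(Gauss_dvdzr _ m3).
  have -> : 3 * (3 * c ^+ 2 - 2 * a * c - (a + 3)) = (3 * c - a) ^+ 2 - sc_Delta a.
    by rewrite /sc_Delta; ring.
  by rewrite rpredB ?dvdz_exp.
- rewrite -(Gauss_dvdzr _ (coprimezXr 3 m3)).
  have -> : 3 ^+ 3 * simplest_cubicz a c =
      (3 * c - a) ^+ 3 - 3 * (3 * c - a) * sc_Delta a - (2 * a + 3) * sc_Delta a.
    by rewrite /simplest_cubicz /sc_Delta; ring.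
  by rewrite !rpredB ?dvdz_exp ?dvdz_mull // dvdz_mulr.
Qed.

Lemma prime_ndvdzM {p : nat} {m n : int} :
  prime p -> ~~ (p%:Z %| m)%Z -> ~~ (p%:Z %| n)%Z -> ~~ (p%:Z %| m * n)%Z.
Proof. by move=> pp; rewrite !dvdzE abszM Euclid_dvdM // => /negPf-> /negPf->. Qed.

Lemma ndvdz_residue {p : nat} {z : int} : (0 < p)%N -> ~~ (p%:Z %| z)%Z ->
  exists2 k : nat, (1 <= k <= p.-1)%N & (p%:Z %| k%:Z - z)%Z.
Proof.
move=> p_gt0 pNz; have p0 : p%:Z != 0 by rewrite lt0n in p_gt0.
exists `|(z %% p)%Z|%N; last first.
  rewrite gez0_abs ?modz_ge0 //; apply/dvdzP; exists (- (z %/ p)%Z).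
  by rewrite {2}(divz_eq z p); ring.
have r_lt_p : (z %% p)%Z < p by rewrite ltz_pmod // ltz_nat.
have r_neq0 : (z %% p)%Z != 0 by apply: contraNneq pNz => /dvdz_mod0P.
have r_ge0 := modz_ge0 z p0.
lia.
Qed.

Lemma root_simplest_cubicE (a : int) (x : algC) :
  root (simplest_cubic a) x = (x ^+ 3 - a%:~R * x ^+ 2 - (a + 3)%:~R * x - 1 == 0).
Proof. by rewrite /root /simplest_cubic !hornerE. Qed.

Lemma simplest_cubic_root_Aint {a : int} {x : algC} :
  root (simplest_cubic a) x -> x \in Aint.
Proof.
rewrite root_simplest_cubicE => /eqP hx.
by apply: (@monic_cubic_root_Aint (- a) (- (a + 3)) (-1)); rewrite -hx; ring.
Qed.

Lemma simplest_cubic_root_shift {a : int} (c : int) {x : algC} : root (simplest_cubic a) x ->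
  (x - c%:~R) ^+ 3 + (3 * c - a)%:~R * (x - c%:~R) ^+ 2
  + (3 * c ^+ 2 - 2 * a * c - (a + 3))%:~R * (x - c%:~R) + (simplest_cubicz a c)%:~R = 0.
Proof. by rewrite root_simplest_cubicE => /eqP <-; rewrite /simplest_cubicz; ring. Qed.

Theorem proposition4p2 (a : int) (p : nat) (rho : algC) :
  (-1 <= a) -> prime p -> (3 < p)%N ->
  (p%:Z ^+ 2 %| sc_Delta a)%Z ->
  root (simplest_cubic a) rho ->
  exists k l : nat, [/\ (1 <= k <= p.-1)%N, (1 <= l <= p.-1)%N &
    (k%:R + l%:R * rho + rho ^+ 2) / p%:R \in Aint].
Proof.
move=> _ pp p_gt3 hD hroot.
have dvd_sqr z : (p%:Z ^+ 2 %| z)%Z -> (p%:Z %| z)%Z.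
  exact: dvdz_trans (dvdz_exp2l _ (isT : (1 <= 2)%N)).
have m3 := coprimez_prime_sqr_3 pp p_gt3.
have [c hc] := exists_third_modz a m3.
have [hB hC] := simplest_cubicz_shift_dvd m3 hc hD.
have beta2_div_p := monic_cubic_root_sqr_div_Aint (dvd_sqr _ hc) (dvd_sqr _ hB) hC
  (simplest_cubic_root_shift c hroot).
have p_neq1 : `|p%:Z|%N != 1%N by rewrite /= neq_ltn prime_gt1 ?orbT.
have pNc := dvdz_simplest_cubicz_ndvdz a c p_neq1 (dvd_sqr _ hC).
have pN2 : ~~ (p%:Z %| -2)%Z.
  by rewrite dvdzE /=; apply: contraTN p_gt3 => /(dvdn_leq (isT : (0 < 2)%N)); lia.
have [k hk hpk] := ndvdz_residue (prime_gt0 pp) (prime_ndvdzM pp pNc pNc).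
have [l hl hpl] := ndvdz_residue (prime_gt0 pp) (prime_ndvdzM pp pN2 pNc).
exists k, l; split => //.
have p0 : p%:R != 0 :> algC by rewrite pnatr_eq0 -lt0n prime_gt0.
have -> : (k%:R + l%:R * rho + rho ^+ 2) / p%:R = (rho - c%:~R) ^+ 2 / p%:~R
    + (k%:Z - c * c)%:~R / p%:~R + (l%:Z - -2 * c)%:~R / p%:~R * rho.
  by field.
have rhoA := simplest_cubic_root_Aint hroot.
by rewrite !rpredD ?Aint_intr_div // rpredM ?Aint_intr_div.
Qed.
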